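(* Let $W$ be a cocompact discrete reflection group of a CAT(0) space $X$, let $C$ be a chamber, and let $S$ be a minimal subset of the set $R$ of reflections in $W$ such that $C=\bigcap_{s\in S}X_s^+$, so that $(W,S)$ is a Coxeter system. Let $T\subset S$. Then $wX_s^+=X^+_{wsw^{-1}}$ for every $w\in W_T$ and every $s\in S\setminus T$.
   Context: An isometry $r$ of a geodesic space $X$ is a reflection if $r^2=\mathrm{id}$, the fixed-point set $F_r$ (the wall of $r$) has empty interior, $X\setminus F_r$ has exactly two convex connected components, and $r$ interchanges them. A reflection group is an isometry group generated by reflections. Let $W$ be a reflection group of $X$ acting properly (i.e. $\{\gamma\in W: \gamma x\in B(x,N)\}$ is finite for all $x\in X$, $N>0$), and $R$ the set of all reflections of $X$ lying in $W$. A chamber is a connected component $C$ of $X\setminus\bigcup_{r\in R}F_r$. $W$ is a cocompact discrete reflection group if $\overline{C}$ is compact and $\{\gamma\in W: \gamma C=C\}=\{1\}$. For $r\in R$, $X_r^+$ denotes the component of $X\setminus F_r$ containing $C$, and $X_r^-$ the other one. $S\subset R$ is minimal with $C=\bigcap_{s\in S}X_s^+$ (i.e. no proper subset has this property); then $S$ generates $W$ and $(W,S)$ is a Coxeter system. For $T\subset S$, $W_T$ is the subgroup of $W$ generated by $T$ (a parabolic subgroup). $\ell$ denotes word length with respect to $S$. *)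

From HB Require Import structures.
From mathcomp Require Import all_boot all_order all_algebra.
From mathcomp Require Import all_classical all_reals all_analysis.
Set Implicit Arguments. Unset Strict Implicit. Unset Printing Implicit Defensive.
Import Order.TTheory GRing.Theory Num.Theory.
Local Open Scope classical_set_scope.
Local Open Scope ring_scope.

Section Geometry.
Variables (R : realType) (X : metricType R).

Local Notation d := (@mdist R X).

Definition geodesic (x y : X) (g : R -> X) : Prop :=
  g 0 = x /\ g (d x y) = y /\
  forall s t, 0 <= s <= d x y -> 0 <= t <= d x y -> d (g s) (g t) = `|s - t|.

Definition geodesic_space : Prop := forall x y : X, exists g, geodesic x y g.

Definition edist (P Q : R * R) : R :=
  Num.sqrt ((P.1 - Q.1) ^+ 2 + (P.2 - Q.2) ^+ 2).

(* the point at distance t from P on the segment [P, Q] of length L *)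
Definition seg_pt (P Q : R * R) (L t : R) : R * R :=
  ((1 - t / L) * P.1 + (t / L) * Q.1, (1 - t / L) * P.2 + (t / L) * Q.2).

Definition vert3 {T : Type} (a b c : T) (i : nat) : T :=
  match i with 0%N => a | 1%N => b | _ => c end.

(* CAT(0): geodesic, and every geodesic triangle (p,q,r) with sides g k
   (side k goes from vert3 p q r k to vert3 q r p k) satisfies the CAT(0)
   inequality with respect to any comparison triangle (P,Q,Q') in E^2. *)
Definition CAT0 : Prop :=
  geodesic_space /\
  forall (p q r : X) (g : 'I_3 -> R -> X),
    (forall k : 'I_3, geodesic (vert3 p q r k) (vert3 q r p k) (g k)) ->
  forall P Q Q' : R * R,
    edist P Q = d p q -> edist Q Q' = d q r -> edist Q' P = d r p ->
  forall (k l : 'I_3) (t s : R),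
    0 <= t <= d (vert3 p q r k) (vert3 q r p k) ->
    0 <= s <= d (vert3 p q r l) (vert3 q r p l) ->
    d (g k t) (g l s) <=
    edist (seg_pt (vert3 P Q Q' k) (vert3 Q Q' P k) (d (vert3 p q r k) (vert3 q r p k)) t)
          (seg_pt (vert3 P Q Q' l) (vert3 Q Q' P l) (d (vert3 p q r l) (vert3 q r p l)) s).

Definition isometric (f : X -> X) : Prop := forall x y, d (f x) (f y) = d x y.

Definition convex (A : set X) : Prop :=
  forall x y g, A x -> A y -> geodesic x y g ->
    forall t, 0 <= t <= d x y -> A (g t).

Definition components (A : set X) : set (set X) :=
  [set Z | exists x, A x /\ Z = connected_component A x].

Definition fixset (r : X -> X) : set X := [set x | r x = x].

Definition reflection (r : X -> X) : Prop :=
  isometric r /\ r \o r = id /\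
  interior (fixset r) = set0 /\
  exists P Q : set X, P <> Q /\
    components (~` fixset r) = [set Z | Z = P \/ Z = Q] /\
    convex P /\ convex Q /\ r @` P = Q /\ r @` Q = P.

Inductive gen (T : set (X -> X)) : (X -> X) -> Prop :=
| gen_id : gen T id
| gen_gen t : T t -> gen T t
| gen_comp f g : gen T f -> gen T g -> gen T (f \o g)
| gen_inv f g : gen T f -> f \o g = id -> g \o f = id -> gen T g.

Definition reflections_in (W : set (X -> X)) : set (X -> X) :=
  [set r | W r /\ reflection r].

Definition reflection_group (W : set (X -> X)) : Prop :=
  W = gen (reflections_in W).

Definition acts_properly (W : set (X -> X)) : Prop :=
  forall (x : X) (N : R), 0 < N -> finite_set [set g | W g /\ d x (g x) < N].

Definition chamber (W : set (X -> X)) (C : set X) : Prop :=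
  components (~` \bigcup_(r in reflections_in W) fixset r) C.

Definition cocompact_discrete (W : set (X -> X)) (C : set X) : Prop :=
  compact (closure C) /\ [set g | W g /\ g @` C = C] = [set id].

Definition Xplus (C : set X) (r : X -> X) : set X :=
  [set x | exists c, C c /\ connected_component (~` fixset r) c x].

Definition minimal_chamber_walls (W : set (X -> X)) (C : set X) (S : set (X -> X)) : Prop :=
  S `<=` reflections_in W /\
  C = \bigcap_(s in S) Xplus C s /\
  forall S', S' `<=` S -> S' <> S -> C <> \bigcap_(s in S') Xplus C s.

End Geometry.

From Pilot Require Import Defs.
From HB Require Import structures.
From mathcomp Require Import all_boot all_order all_algebra.
From mathcomp Require Import all_classical all_reals all_analysis.
From mathcomp Require Import lra zify.
Set Implicit Arguments. Unset Strict Implicit. Unset Printing Implicit Defensive.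
Import Order.TTheory GRing.Theory Num.Theory numFieldNormedType.Exports.
Local Open Scope classical_set_scope.
Local Open Scope ring_scope.
Local Notation fixset := Defs.fixset.

(* For t in S, minimality of S yields a point p on the wall of t that lies on the
   inner side of every other wall of C; by properness no other wall comes near p,
   so C and tC are the only chambers around p. As the stabiliser of C is trivial,
   the wall of t is then the only wall separating C from tC, and by equivariance
   the wall of g t g^-1 is the only one separating gC from gtC. Along a gallery
   C, t1 C, t1 t2 C, ... the side of a wall F_r containing the current chamber
   therefore changes only when r = t1 ... t(k-1) tk t(k-1) ... t1. If s in S \ T
   were a product of letters of T, a shortest such word would either allow two
   letters to cancel or have its first wall separating C from sC, which is
   impossible. So no gallery of W_T crosses the wall of s: every uC with u in W_T
   lies in X_s^+, and applying w gives w X_s^+ = X^+_(w s w^-1). *)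

(** * Geodesic segments *)

Section GeodesicSegment.
Context {R : realType} {X : metricType R}.
Local Notation d := (@mdist R X).

Definition segment (x y : X) (g : R -> X) : set X := g @` [set` `[0, d x y]].

Lemma geodesic_dist x y g s : geodesic x y g -> 0 <= s <= d x y -> d x (g s) = s.
Proof.
move=> [g0 [_ gd]] /[dup] /andP[s0 _] hs.
by rewrite -g0 gd ?lexx ?mdist_ge0 // sub0r normrN ger0_norm.
Qed.

Lemma segment_connected x y g : geodesic x y g -> connected (segment x y g).
Proof.
move=> [_ [_ gd]]; apply: connected_continuous_connected.
  exact/connected_intervalP/interval_is_interval.
apply/subspace_continuousP => s; rewrite /= in_itv /= => hs.
apply/cvg_ballP => e e0; apply: filterS (@nbhsx_ballx _ _ s e e0) => u.
by rewrite /= !ballEmdist /= in_itv /= => su hu; rewrite gd // distrC.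
Qed.

Lemma segment_start x y g : geodesic x y g -> segment x y g x.
Proof. by move=> [g0 _]; exists 0 => //=; rewrite in_itv /= lexx mdist_ge0. Qed.

Lemma segment_end x y g : geodesic x y g -> segment x y g y.
Proof. by move=> [_ [gL _]]; exists (d x y) => //=; rewrite in_itv /= lexx mdist_ge0. Qed.

Lemma segment_dist x y g z : geodesic x y g -> segment x y g z -> d x z <= d x y.
Proof.
move=> hg [s + <-]; rewrite /= in_itv /= => hs.
by rewrite (geodesic_dist hg hs); case/andP: hs.
Qed.

Lemma segment_near p x y g z e : geodesic x y g -> d p x < e -> d p y < e ->
  segment x y g z -> d p z < 3 * e.
Proof.
move=> hg px py /(segment_dist hg) xz.
have := metric_triangle p x z; have := metric_triangle x p y.
by rewrite (metric_sym x p); lra.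
Qed.

Lemma open_mdistP (A : set X) :
  open A <-> forall x, A x -> exists2 e, 0 < e & forall z, d x z < e -> A z.
Proof.
rewrite openE; split=> [oA x /oA /nbhs_ballP[e e0 he]|oA x /oA[e e0 he]].
  by exists e => // z hz; apply: he; rewrite ballEmdist.
by apply/nbhs_ballP; exists e => // z; rewrite ballEmdist; exact: he.
Qed.

Lemma interior_mdistP (A : set X) x :
  A° x <-> exists2 e, 0 < e & forall z, d x z < e -> A z.
Proof.
split=> [/nbhs_ballP[e e0 he]|[e e0 he]].
  by exists e => // z hz; apply: he; rewrite ballEmdist.
by apply/nbhs_ballP; exists e => // z; rewrite ballEmdist; exact: he.
Qed.

Hypothesis geoX : geodesic_space X.

Lemma connected_component_ball (A : set X) x y e :
  (forall z, d y z < e -> A z) -> connected_component A x y ->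
  forall z, d y z < e -> connected_component A x z.
Proof.
move=> ballA Axy z yz; have [g hg] := geoX y z.
rewrite (same_connected_component Axy).
apply: connected_component_max (segment_start hg) _ (segment_connected hg) _ (segment_end hg).
by move=> w /(segment_dist hg) yw; apply: ballA; exact: le_lt_trans yz.
Qed.

Lemma open_connected_component (A : set X) x : open A -> open (connected_component A x).
Proof.
move=> /open_mdistP oA; apply/open_mdistP => y Axy.
have [e e0 ballA] := oA y (connected_component_sub Axy).
by exists e => //; exact: connected_component_ball ballA Axy.
Qed.

End GeodesicSegment.

(** * Isometries and reflections *)

Section CancelImage.
Context {T U : Type} (g : T -> U) (g' : U -> T).
Hypotheses (gK : cancel g g') (g'K : cancel g' g).

Lemma image_can (A : set T) : g @` A = g' @^-1` A.
Proof.
apply/seteqP; split=> [_ [x Ax <-]|y Ay]; first by rewrite /preimage /= gK.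
by exists (g' y).
Qed.

Lemma image_canK (A : set T) : g' @` (g @` A) = A.
Proof. by rewrite image_comp; apply: eq_image_id => x _; exact: gK. Qed.

Lemma image_conj (r : T -> T) (A : set T) : (g \o r \o g') @` (g @` A) = g @` (r @` A).
Proof. by rewrite !image_comp; apply: eq_imagel => x _ /=; rewrite gK. Qed.

Lemma image_can_setC (A : set T) : g @` (~` A) = ~` (g @` A).
Proof. by rewrite !image_can. Qed.

End CancelImage.

Lemma image_connected_component_sub {T U : topologicalType} (g : T -> U) A x :
  continuous g -> g @` connected_component A x `<=` connected_component (g @` A) (g x).
Proof.
move=> g_cont; have [Ax|nAx] := pselect (A x); last first.
  by rewrite connected_component_out // image_set0.
apply: connected_component_max.
- by exists x => //; exact: connected_component_refl.
- by apply: image_subset; exact: connected_component_sub.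
apply: connected_continuous_connected; first exact: component_connected.
exact: continuous_subspaceT.
Qed.

Lemma image_connected_component {T U : topologicalType} (g : T -> U) (g' : U -> T) A x :
  cancel g g' -> cancel g' g -> continuous g -> continuous g' ->
  g @` connected_component A x = connected_component (g @` A) (g x).
Proof.
move=> gK g'K g_cont g'_cont; apply/seteqP; split.
  exact: image_connected_component_sub.
rewrite -[X in X `<=` _](image_canK g'K); apply: image_subset.
have := image_connected_component_sub (A := g @` A) (x := g x) g'_cont.
by rewrite (image_canK gK) gK.
Qed.

Section Isometry.
Context {R : realType} {X : metricType R}.
Local Notation d := (@mdist R X).
Implicit Types (g h r : X -> X).

Definition isometry_inv (g g' : X -> X) := [/\ isometric g, cancel g g' & cancel g' g].

Lemma comp_idK (g g' : X -> X) : g' \o g = id -> cancel g g'.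
Proof. by move=> gg' x; exact: (congr1 (@^~ x) gg'). Qed.

Lemma isometry_invV g g' : isometry_inv g g' -> isometry_inv g' g.
Proof. by move=> [g_iso gK g'K]; split=> // x y; rewrite -g_iso !g'K. Qed.

Lemma isometry_invM g g' h h' :
  isometry_inv g g' -> isometry_inv h h' -> isometry_inv (g \o h) (h' \o g').
Proof.
move=> [g_iso gK g'K] [h_iso hK h'K].
by split=> [x y|x|x] /=; rewrite ?g_iso ?h_iso ?gK ?hK ?h'K ?g'K.
Qed.

Lemma isometry_inv_id : isometry_inv id id.
Proof. by []. Qed.

Lemma isometric_continuous (g : X -> X) : isometric g -> continuous g.
Proof.
move=> g_iso x; apply/cvg_ballP => e e0.
by apply: filterS (@nbhsx_ballx _ _ x e e0) => y; rewrite !ballEmdist /= g_iso.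
Qed.

Lemma isometry_inv_connected_component g g' A x : isometry_inv g g' ->
  g @` connected_component A x = connected_component (g @` A) (g x).
Proof.
move=> /[dup] [[g_iso gK g'K]] /isometry_invV [g'_iso _ _].
by apply: image_connected_component gK g'K _ _; exact: isometric_continuous.
Qed.

Lemma isometry_inv_components g g' (A : set X) : isometry_inv g g' ->
  components (g @` A) = (fun Z => g @` Z) @` components A.
Proof.
move=> /[dup] hg [_ gK g'K]; apply/seteqP; split=> Z.
  move=> [y [Ay ->]]; exists (connected_component A (g' y)).
    by exists (g' y); split=> //; move: Ay; rewrite (image_can gK g'K).
  by rewrite (isometry_inv_connected_component _ _ hg) g'K.
move=> [_ [x [Ax ->]] <-]; exists (g x); split; first by exists x.
exact: isometry_inv_connected_component hg.
Qed.

Lemma isometry_inv_convex g g' (P : set X) : isometry_inv g g' -> convex P -> convex (g @` P).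
Proof.
move=> hg cP x y c; have [_ gK g'K] := hg; have [g'_iso _ _] := isometry_invV hg.
rewrite (image_can gK g'K) => Px Py [c0 [cL cd]] t ht.
apply: (cP (g' x) (g' y) (g' \o c)) => //; last by rewrite g'_iso.
split; first by rewrite /= c0.
rewrite g'_iso; split; first by rewrite /= cL.
by move=> s u hs hu; rewrite /= g'_iso cd.
Qed.

Lemma fixset_conj g g' r : isometry_inv g g' -> fixset (g \o r \o g') = g @` fixset r.
Proof.
move=> [_ gK g'K]; rewrite (image_can gK g'K); apply/seteqP; split=> y /=.
  by rewrite /Defs.fixset /preimage /= => e; rewrite -{2}e gK.
by rewrite /Defs.fixset /preimage /= => ->; rewrite g'K.
Qed.

Lemma reflectionK r : reflection r -> cancel r r.
Proof. by move=> [_ [rr _]]; exact: comp_idK. Qed.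

Lemma reflection_isometry_inv r : reflection r -> isometry_inv r r.
Proof. by move=> /[dup] /reflectionK rK [r_iso _]. Qed.

Lemma reflection_conj g g' r : isometry_inv g g' -> reflection r -> reflection (g \o r \o g').
Proof.
move=> hg /[dup] /reflectionK rK [r_iso [_ [intF [P [Q [PQ [cF [cP [cQ [rP rQ]]]]]]]]]].
have [g_iso gK g'K] := hg; have [g'_iso _ _] := isometry_invV hg.
split; first by move=> x y /=; rewrite g_iso r_iso g'_iso.
split; first by apply/funext => x /=; rewrite gK rK g'K.
split.
  rewrite (fixset_conj _ hg) -subset0 => x /interior_mdistP[e e0 he].
  suff : (fixset r)° (g' x) by rewrite intF.
  apply/interior_mdistP; exists e => // z hz.
  have /he : d x (g z) < e by rewrite -(g'K x) g_iso.
  by rewrite (image_can gK g'K) /preimage /= gK.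
exists (g @` P), (g @` Q); split.
  by move=> ePQ; apply: PQ; rewrite -(image_canK gK P) ePQ (image_canK gK).
split.
  rewrite (fixset_conj _ hg) -(image_can_setC gK g'K) (isometry_inv_components _ hg) cF.
  apply/seteqP; split=> Z; first by case=> Z' [] -> <-; [left|right].
  by case=> ->; [exists P; [left|]|exists Q; [right|]].
split; first exact: isometry_inv_convex hg cP.
split; first exact: isometry_inv_convex hg cQ.
by rewrite !(image_conj gK) rP rQ.
Qed.

End Isometry.

Lemma connected_component_eq {T : topologicalType} (A B : set T) a b :
  connected B -> B `<=` A -> B a -> B b -> connected_component A a = connected_component A b.
Proof.
move=> cB BA Ba Bb; apply: same_connected_component.
exact: connected_component_max Ba BA cB _ Bb.
Qed.

Section Sides.
Context {R : realType} {X : metricType R}.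
Local Notation d := (@mdist R X).
Implicit Types (g r : X -> X) (x y z : X).

Definition side r x : set X := connected_component (~` fixset r) x.

Lemma side_refl r x : ~ fixset r x -> side r x x.
Proof. exact: connected_component_refl. Qed.

Lemma isometry_inv_side g g' r x : isometry_inv g g' ->
  g @` side r x = side (g \o r \o g') (g x).
Proof.
move=> /[dup] hg [_ gK g'K].
by rewrite /side (isometry_inv_connected_component _ _ hg) (image_can_setC gK g'K) fixset_conj.
Qed.

Lemma reflection_sides r : reflection r -> exists P Q : set X,
  [/\ P <> Q, r @` P = Q, r @` Q = P, convex P /\ convex Q &
      forall y, ~ fixset r y -> side r y = P \/ side r y = Q].
Proof.
move=> [_ [_ [_ [P [Q [PQ [cF [cP [cQ [rP rQ]]]]]]]]]].
exists P, Q; split=> // y ny.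
have : components (~` fixset r) (side r y) by exists y.
by rewrite cF.
Qed.

Lemma side_convex r y : reflection r -> ~ fixset r y -> convex (side r y).
Proof. by move=> /reflection_sides[P [Q [_ _ _ [cP cQ] sides]]] /sides[]->. Qed.

Lemma reflection_image_side r y : reflection r -> r @` side r y = side r (r y).
Proof.
move=> /[dup] /reflectionK rK [r_iso [rr _]].
by rewrite (isometry_inv_side _ _ (And3 r_iso rK rK)) -compA rr.
Qed.

Lemma side_reflect_neq r y : reflection r -> ~ fixset r y -> side r (r y) <> side r y.
Proof.
move=> hr ny; have [P [Q [PQ rP rQ _ sides]]] := reflection_sides hr.
rewrite -reflection_image_side //; case: (sides y ny) => ->; last by rewrite rQ.
by rewrite rP; apply: nesym.
Qed.

Lemma side_reflect_other r y z : reflection r -> ~ fixset r y -> ~ fixset r z ->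
  ~ side r z y -> side r z (r y).
Proof.
move=> hr ny nz nzy; have [P [Q [PQ rP rQ _ sides]]] := reflection_sides hr.
have zy : side r z <> side r y by move=> zy; apply: nzy; rewrite zy; exact: side_refl.
have ry : (r @` side r y) (r y) by exists y => //; exact: side_refl.
by case: (sides y ny) (sides z nz) zy ry => -> [] -> zy; rewrite ?rP ?rQ; [case: zy| | |case: zy].
Qed.

Lemma reflection_neq_id r x : reflection r -> r <> id.
Proof.
move=> [_ [_ [intF _]]] rid; suff : (fixset r)° x by rewrite intF.
have -> : fixset r = setT by apply/seteqP; split => // y _; rewrite /Defs.fixset rid.
by rewrite interiorT.
Qed.

Lemma near_off_fixset r x e : reflection r -> 0 < e -> exists z, d x z < e /\ ~ fixset r z.
Proof.
move=> [_ [_ [intF _]]] e0; apply: contrapT => hn.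
suff : (fixset r)° x by rewrite intF.
by apply/interior_mdistP; exists e => // z xz; apply: contrapT => nz; apply: hn; exists z.
Qed.

End Sides.

(** * Reflection groups *)

Lemma finite_set_gt0_lbound (R : realType) (B : set R) :
  finite_set B -> (forall r, B r -> 0 < r) -> exists2 e, 0 < e & forall r, B r -> e <= r.
Proof.
move=> finB B_gt0.
(* The filter [0 < r], true on [B], is what lets [lt_bigmin] apply. *)
exists (\big[Order.min/1]_(r <- finmap.enum_fset (fset_set B) | 0 < r) r).
  exact: lt_bigmin.
move=> r Br; apply: bigmin_inf_seq (B_gt0 r Br) _ => //.
by rewrite in_fset_set // mem_set.
Qed.

Lemma gen_mono {R : realType} {X : metricType R} (T1 T2 : set (X -> X)) :
  T1 `<=` T2 -> gen T1 `<=` gen T2.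
Proof.
move=> T12 g; elim=> {g} [|t /T12|f g _ f2 _ g2|f g _ f2 fg gf].
- exact: gen_id.
- exact: gen_gen.
- exact: gen_comp.
- exact: gen_inv fg gf.
Qed.

Section ReflectionGroup.
Context {R : realType} {X : metricType R}.
Local Notation d := (@mdist R X).
Variable W : set (X -> X).
Hypothesis W_refl : reflection_group W.
Implicit Types (g h r : X -> X).

Lemma reflection_group_id : W id.
Proof. by rewrite W_refl; exact: gen_id. Qed.

Lemma reflection_group_comp g h : W g -> W h -> W (g \o h).
Proof. by rewrite W_refl; exact: gen_comp. Qed.

Lemma reflection_group_inv g g' : W g -> cancel g g' -> cancel g' g -> W g'.
Proof.
rewrite W_refl => Wg gK g'K.
by apply: gen_inv Wg _ _; apply/funext => x /=; rewrite ?gK ?g'K.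
Qed.

Lemma reflection_group_isometry_inv g : W g -> exists2 g', W g' & isometry_inv g g'.
Proof.
rewrite W_refl; elim=> {g} [|r rW|f g _ [f' Wf' hf] _ [g' Wg' hg]|f g Wf [f' _ hf] fg gf].
- by exists id; [exact: gen_id|exact: isometry_inv_id].
- by exists r; [exact: gen_gen|exact: reflection_isometry_inv (proj2 rW)].
- by exists (g' \o f'); [exact: gen_comp|exact: isometry_invM].
- have [f_iso fK f'K] := hf; have -> : g = f'.
    by apply/funext => x; rewrite -[g x]fK (comp_idK fg).
  by exists f => //; exact: isometry_invV.
Qed.

Lemma reflection_group_isometric g : W g -> isometric g.
Proof. by case/reflection_group_isometry_inv => g' _ []. Qed.

Lemma reflection_group_conj g g' r : W g -> isometry_inv g g' ->
  reflections_in W r -> reflections_in W (g \o r \o g').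
Proof.
move=> Wg /[dup] hg [_ gK g'K] [Wr hr]; split; last exact: reflection_conj.
apply: reflection_group_comp; first exact: reflection_group_comp.
exact: reflection_group_inv Wg gK g'K.
Qed.

Definition off_walls : set X := ~` \bigcup_(r in reflections_in W) fixset r.

Lemma off_walls_fixset r : reflections_in W r -> off_walls `<=` ~` fixset r.
Proof. by move=> rW x offx rx; apply: offx; exists r. Qed.

Lemma image_off_walls_sub g g' : W g -> isometry_inv g g' -> g @` off_walls `<=` off_walls.
Proof.
move=> Wg hg _ [x offx <-] [r rW rgx]; apply: offx.
have [_ gK g'K] := hg; have Wg' := reflection_group_inv Wg gK g'K.
exists (g' \o r \o g); first exact: reflection_group_conj Wg' (isometry_invV hg) rW.
by rewrite /Defs.fixset /= rgx gK.
Qed.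

Lemma image_off_walls g : W g -> g @` off_walls = off_walls.
Proof.
move=> Wg; have [g' Wg' hg] := reflection_group_isometry_inv Wg; have [_ gK g'K] := hg.
apply/seteqP; split; first exact: image_off_walls_sub hg.
rewrite -[X in X `<=` _](image_canK g'K); apply: image_subset.
exact: image_off_walls_sub (isometry_invV hg).
Qed.

Hypothesis W_proper : acts_properly W.

Lemma fixsets_away_from x (Q : set (X -> X)) :
  Q `<=` W -> (forall r, Q r -> r x <> x) ->
  exists2 e, 0 < e & forall r z, Q r -> d x z < e -> r z <> z.
Proof.
move=> QW Qx.
pose moves := (fun g => d x (g x)) @` ([set g | W g /\ d x (g x) < 1] `&` Q).
have [e0 e0_gt0 e0_le] : exists2 e0, 0 < e0 & forall a, moves a -> e0 <= a.
  apply: finite_set_gt0_lbound; first exact/finite_image/finite_setIl/W_proper.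
  by move=> _ [g [_ Qg] <-]; rewrite mdist_gt0; apply/eqP => gx; apply: (Qx g Qg).
exists (Num.min e0 1 / 2) => [|r z Qr xz rz]; first by rewrite divr_gt0 // lt_min e0_gt0 ltr01.
have [min_e0 min_1] : Num.min e0 1 <= e0 /\ Num.min e0 1 <= 1 by rewrite !ge_min !lexx orbT.
have xrx : d x (r x) <= 2 * d x z.
  have := metric_triangle x z (r x).
  by rewrite -{2}rz (reflection_group_isometric (QW r Qr)) (metric_sym z x); lra.
have : e0 <= d x (r x) by apply: e0_le; exists r => //; split => //; split; [exact: QW|lra].
lra.
Qed.

Lemma open_off_walls : open off_walls.
Proof.
apply/open_mdistP => x offx.
have [e e_gt0 away] : exists2 e, 0 < e &
    forall r z, reflections_in W r -> d x z < e -> r z <> z.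
  by apply: fixsets_away_from => [r []|r rW rx] //; apply: offx; exists r.
by exists e => // z xz [r rW rz]; exact: away rW xz rz.
Qed.

End ReflectionGroup.

(** * Words *)

Section Words.
Context {R : realType} {X : metricType R}.
Implicit Types (t : X -> X) (l u : seq (X -> X)) (T : set (X -> X)).

Fixpoint word_prod l : X -> X := if l is t :: l' then t \o word_prod l' else id.

Fixpoint word_over T l : Prop := if l is t :: l' then T t /\ word_over T l' else True.

(* The reflection in the wall crossed when the gallery of [u] is extended by [t]. *)
Definition word_conj u t : X -> X := word_prod u \o t \o word_prod (rev u).

Lemma word_prod_cat l1 l2 : word_prod (l1 ++ l2) = word_prod l1 \o word_prod l2.
Proof. by elim: l1 => //= t l1 ->. Qed.

Lemma word_over_cat T l1 l2 : word_over T (l1 ++ l2) <-> word_over T l1 /\ word_over T l2.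
Proof.
elim: l1 => [|t l1 IH] /=; first by split=> // -[].
by rewrite IH; split=> [[? [? ?]]|[[? ?] ?]].
Qed.

Lemma word_over_rev T l : word_over T l -> word_over T (rev l).
Proof.
by elim: l => //= t l IH [Tt Tl]; rewrite rev_cons -cats1; apply/word_over_cat; split; [exact: IH|].
Qed.

Lemma word_over_take T k l : word_over T l -> word_over T (take k l).
Proof. by rewrite -{1}(cat_take_drop k l) => /word_over_cat[]. Qed.

Lemma word_over_drop T k l : word_over T l -> word_over T (drop k l).
Proof. by rewrite -{1}(cat_take_drop k l) => /word_over_cat[]. Qed.

Lemma word_over_nth T k l : word_over T l -> (k < size l)%N -> T (nth id l k).
Proof. by elim: l k => //= t l IH [|k] [Tt Tl] //= /IH; apply. Qed.

Lemma word_over_sub T1 T2 l : T1 `<=` T2 -> word_over T1 l -> word_over T2 l.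
Proof. by move=> T12; elim: l => //= t l IH [/T12 T2t /IH]. Qed.

Variable T : set (X -> X).
Hypothesis T_refl : forall t, T t -> reflection t.

Lemma word_prod_revK l : word_over T l -> cancel (word_prod (rev l)) (word_prod l).
Proof.
elim: l => //= t l IH [Tt Tl] x.
by rewrite rev_cons -cats1 word_prod_cat /= IH // (reflectionK (T_refl Tt)).
Qed.

Lemma word_prodK l : word_over T l -> cancel (word_prod l) (word_prod (rev l)).
Proof. by move=> /word_over_rev/word_prod_revK; rewrite revK. Qed.

Lemma word_isometry_inv l : word_over T l -> isometry_inv (word_prod l) (word_prod (rev l)).
Proof.
move=> Tl; split; [|exact: word_prodK|exact: word_prod_revK].
elim: l Tl => [_ x y //|t l IH [Tt Tl] x y /=].
by have [t_iso _] := T_refl Tt; rewrite t_iso IH.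
Qed.

Lemma gen_word w : gen T w -> exists2 l, word_over T l & w = word_prod l.
Proof.
elim=> {w} [|t Tt|f g _ [l1 Tl1 ->] _ [l2 Tl2 ->]|f g _ [l Tl ->] fg _].
- by exists [::].
- by exists [:: t].
- by exists (l1 ++ l2); [apply/word_over_cat|rewrite word_prod_cat].
- exists (rev l); first exact: word_over_rev.
  by apply/funext => x; rewrite -[g x](word_prodK Tl) (comp_idK fg).
Qed.

Lemma word_prod_delete t l k : (k < size l)%N -> word_over T (t :: l) ->
  t = word_conj (t :: take k l) (nth id l k) ->
  word_prod (t :: l) = word_prod (take k l ++ drop k.+1 l).
Proof.
move=> lt_k_l [Tt Tl] tE; have tK := reflectionK (T_refl Tt).
have Tu := word_over_take k Tl; set u := take k l in tE Tu *.
have exchange x : word_prod u (nth id l k x) = t (word_prod u x).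
  have := congr1 (@^~ (t (word_prod u x))) tE.
  by rewrite /word_conj /= rev_cons -cats1 word_prod_cat /= tK (word_prodK Tu) => ->; rewrite tK.
apply/funext => x; rewrite /= -{1}(cat_take_drop k l) word_prod_cat /= (drop_nth id lt_k_l) /=.
by rewrite exchange tK word_prod_cat.
Qed.

End Words.

(** * Chambers and their walls *)

Section Chamber.
Context {R : realType} {X : metricType R}.
Local Notation d := (@mdist R X).
Variables (W : set (X -> X)) (C : set X).
Hypotheses (geoX : geodesic_space X) (W_refl : reflection_group W)
  (W_proper : acts_properly W) (C_chamber : chamber W C)
  (C_free : cocompact_discrete W C).
Implicit Types (g h r t : X -> X).

Lemma chamberE c : C c -> C = connected_component (off_walls W) c.
Proof. by have [c0 [_ ->]] := C_chamber; exact: same_connected_component. Qed.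

Lemma chamber_point : exists c, C c.
Proof. by have [c0 [offc0 ->]] := C_chamber; exists c0; exact: connected_component_refl. Qed.

Lemma chamber_off_walls : C `<=` off_walls W.
Proof. by have [c0 [_ ->]] := C_chamber; exact: connected_component_sub. Qed.

Lemma image_chamber g c : W g -> C c -> g @` C = connected_component (off_walls W) (g c).
Proof.
move=> Wg Cc; have [g' _ hg] := reflection_group_isometry_inv W_refl Wg.
by rewrite (chamberE Cc) (isometry_inv_connected_component _ _ hg) (image_off_walls W_refl Wg).
Qed.

Lemma open_image_chamber g : W g -> open (g @` C).
Proof.
move=> Wg; have [c Cc] := chamber_point; rewrite (image_chamber Wg Cc).
exact/open_connected_component/open_off_walls.
Qed.

Lemma connected_image_chamber g : W g -> connected (g @` C).
Proof.
move=> Wg; have [c Cc] := chamber_point; rewrite (image_chamber Wg Cc).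
exact: component_connected.
Qed.

Lemma image_chamber_off_walls g : W g -> g @` C `<=` off_walls W.
Proof.
move=> Wg; have [c Cc] := chamber_point; rewrite (image_chamber Wg Cc).
exact: connected_component_sub.
Qed.

Lemma image_chamber_eq g h x : W g -> W h -> (g @` C) x -> (h @` C) x -> g @` C = h @` C.
Proof.
by move=> Wg Wh [c Cc <-] [c' Cc' e]; rewrite (image_chamber Wg Cc) (image_chamber Wh Cc') e.
Qed.

Lemma side_image_chamber g r c y : W g -> reflections_in W r -> C c -> C y ->
  side r (g c) = side r (g y).
Proof.
move=> Wg rW Cc Cy; apply: connected_component_eq (connected_image_chamber Wg) _ _ _.
- by move=> z /(image_chamber_off_walls Wg); exact: off_walls_fixset.
- by exists c.
- by exists y.
Qed.

Lemma Xplus_side r c : reflections_in W r -> C c -> Xplus C r = side r c.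
Proof.
move=> rW Cc; apply/seteqP; split=> [x [c' [Cc' c'x]]|x cx]; last by exists c.
by rewrite -(side_image_chamber (reflection_group_id W_refl) rW Cc' Cc).
Qed.

Lemma chamber_stabilizer g : W g -> g @` C = C -> g = id.
Proof.
move=> Wg gC; have [_ stab] := C_free.
by have : [set g | W g /\ g @` C = C] g by []; rewrite stab.
Qed.

Variable S : set (X -> X).
Hypothesis S_min : minimal_chamber_walls W C S.

Lemma walls_reflections t : S t -> reflections_in W t.
Proof. by have [SW _] := S_min; exact: SW. Qed.

Lemma minimal_walls_witness t : S t ->
  exists x, (forall r, S r -> r <> t -> Xplus C r x) /\ ~ Xplus C t x.
Proof.
move=> St; have [_ [Ceq Smin]] := S_min.
have : C <> \bigcap_(r in S `\ t) Xplus C r.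
  apply: Smin => [r []//|S'S]; by move: St; rewrite -S'S => -[_]; apply.
move=> CS'; have [x [S'x nCx]] : exists x, (\bigcap_(r in S `\ t) Xplus C r) x /\ ~ C x.
  apply: contrapT => hn; apply: CS'; apply/seteqP; split.
    move=> x Cx r [Sr _]; have rW := walls_reflections Sr.
    by rewrite (Xplus_side rW Cx); exact/side_refl/off_walls_fixset/chamber_off_walls.
  by move=> x S'x; apply: contrapT => nCx; apply: hn; exists x.
exists x; split=> [r Sr rt|xt]; first exact: S'x.
apply: nCx; rewrite Ceq => r Sr.
by have [->|rt] := pselect (r = t); last exact: S'x.
Qed.

Lemma wall_point_off_other_walls t : S t ->
  exists p, t p = p /\ forall r, S r -> r <> t -> Xplus C r p.
Proof.
move=> St; have [x [x_in x_out]] := minimal_walls_witness St.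
have [c Cc] := chamber_point; have [g hg] := geoX c x.
have seg_in r : S r -> r <> t -> segment c x g `<=` Xplus C r.
  move=> Sr rt; have rW := walls_reflections Sr; rewrite (Xplus_side rW Cc).
  have offc := off_walls_fixset rW (chamber_off_walls Cc).
  move=> _ [s + <-]; rewrite /= in_itv /= => hs.
  apply: (side_convex (proj2 rW) offc) hg _ hs; first exact: side_refl.
  by rewrite -(Xplus_side rW Cc); exact: x_in.
have [p [seg_p tp]] : exists p, segment c x g p /\ t p = p.
  apply: contrapT => hn; apply: x_out; rewrite (Xplus_side (walls_reflections St) Cc).
  apply: connected_component_max (segment_start hg) _ (segment_connected hg) _ (segment_end hg).
  by move=> y sy ty; apply: hn; exists y.
by exists p; split=> // r Sr rt; exact: seg_in.
Qed.

Lemma panel_nbhs t : S t -> exists p, exists2 e, 0 < e &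
  t p = p /\ forall y, d p y < e -> ~ fixset t y -> C y \/ (t @` C) y.
Proof.
move=> St; have [Wt ht] := walls_reflections St; have [t_iso _] := ht.
have [p [tp p_in]] := wall_point_off_other_walls St; have [c Cc] := chamber_point.
have [e e_gt0 away] : exists2 e, 0 < e & forall r z, (S `\ t) r -> d p z < e -> r z <> z.
  apply: (fixsets_away_from W_refl W_proper) => [r [/walls_reflections []//]|r [Sr rt]].
  have rW := walls_reflections Sr.
  by move: (p_in r Sr rt); rewrite (Xplus_side rW Cc) => /connected_component_sub.
have near_in z : d p z < e -> forall r, S r -> r <> t -> Xplus C r z.
  move=> pz r Sr rt; have rW := walls_reflections Sr.
  move: (p_in r Sr rt); rewrite !(Xplus_side rW Cc) => cp.
  by apply: (connected_component_ball geoX _ cp pz) => w pw; exact: away (conj Sr rt) pw.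
have near_C z : d p z < e -> Xplus C t z -> C z.
  move=> pz tz; have [_ [Ceq _]] := S_min; rewrite Ceq => r Sr.
  by have [->|rt] := pselect (r = t); last exact: near_in.
exists p, e => //; split => // y py ny.
have [ty|nty] := pselect (Xplus C t y); [left; exact: near_C|right].
exists (t y); last exact: reflectionK ht y.
apply: near_C; first by rewrite -{1}tp t_iso.
have offc := off_walls_fixset (walls_reflections St) (chamber_off_walls Cc).
by rewrite (Xplus_side (walls_reflections St) Cc) in nty *; exact: side_reflect_other.
Qed.

Section Panel.
Variables (t : X -> X) (p : X) (e : R).
Hypotheses (St : S t) (tp : t p = p) (e_gt0 : 0 < e)
  (panel : forall y, d p y < e -> ~ fixset t y -> C y \/ (t @` C) y).

Lemma panel_chamber_point eps : 0 < eps -> eps <= e ->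
  exists y, [/\ C y, d p y < eps & d p (t y) < eps].
Proof.
move=> eps_gt0 eps_e; have [_ ht] := walls_reflections St; have [t_iso _] := ht.
have [z [pz nz]] := near_off_fixset p ht eps_gt0.
have ptz : d p (t z) = d p z by rewrite -{1}tp t_iso.
case: (panel (lt_le_trans pz eps_e) nz) => [Cz|[y Cy yz]]; first by exists z; rewrite ptz.
have pyz : d p y = d p z by rewrite -ptz -yz (reflectionK ht).
by exists y; rewrite yz pyz.
Qed.

Lemma panel_chamber g : W g -> (exists2 z, (g @` C) z & d p z < e) ->
  g @` C = C \/ g @` C = t @` C.
Proof.
move=> Wg [z gz pz]; have [Wt ht] := walls_reflections St.
have [eta eta_gt0 eta_in] := proj1 (open_mdistP _) (open_image_chamber Wg) z gz.
have m_gt0 : 0 < Num.min eta (e - d p z) by rewrite lt_min eta_gt0 subr_gt0 pz.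
have [w [zw nw]] := near_off_fixset z ht m_gt0.
have gw : (g @` C) w by apply: eta_in; apply: lt_le_trans zw _; rewrite ge_min lexx.
have pw : d p w < e.
  have : Num.min eta (e - d p z) <= e - d p z by rewrite ge_min lexx orbT.
  by have := metric_triangle p z w; lra.
case: (panel pw nw) => [Cw|tw]; [left|right].
  rewrite -[RHS]image_id; apply: (image_chamber_eq Wg) gw _ => //.
    exact: reflection_group_id.
  by rewrite image_id.
exact: image_chamber_eq Wg Wt gw tw.
Qed.

Lemma panel_wall_unique r : reflections_in W r -> r p = p -> r = t.
Proof.
move=> [Wr hr] rp; have [Wt ht] := walls_reflections St.
have [r_iso _] := hr; have [t_iso _] := ht; have tK := reflectionK ht.
have [y [Cy py _]] := panel_chamber_point e_gt0 (lexx e).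
have Wrt : W (r \o t) := reflection_group_comp W_refl Wr Wt.
have prty : d p (r (t y)) < e by rewrite -{1}rp r_iso -{1}tp t_iso.
have rty : ((r \o t) @` C) (r (t y)) by exists y.
(* [r t C] is a chamber at [p], hence [C] (so [r = t]) or [t C] (so [r = id]). *)
case: (panel_chamber Wrt (ex_intro2 _ _ _ rty prty)) => rtC.
  have rt := chamber_stabilizer Wrt rtC.
  by apply/funext => x; rewrite -[in LHS](tK x); exact: (congr1 (@^~ (t x)) rt).
have Wtrt : W (t \o (r \o t)) := reflection_group_comp W_refl Wt Wrt.
have trtC : (t \o (r \o t)) @` C = C by rewrite -image_comp rtC (image_canK tK).
have trt := chamber_stabilizer Wtrt trtC.
exfalso; apply: (reflection_neq_id y hr); apply/funext => x.
by have := congr1 (fun f => t (f (t x))) trt; rewrite /= !tK.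
Qed.

Lemma panel_side r c : reflections_in W r -> r p <> p -> C c -> side r (t c) = side r c.
Proof.
move=> rW rp Cc; have [Wt ht] := walls_reflections St.
have [eta eta_gt0 away] : exists2 eta, 0 < eta &
    forall r' z, [set r] r' -> d p z < eta -> r' z <> z.
  by apply: (fixsets_away_from W_refl W_proper) => [_ -> |_ ->] //; case: rW.
pose eps := Num.min e eta / 3.
have [eps_gt0 eps_e eps_eta] : [/\ 0 < eps, eps <= e & 3 * eps <= eta].
  have : Num.min e eta <= e by rewrite ge_min lexx.
  have : Num.min e eta <= eta by rewrite ge_min lexx orbT.
  have : 0 < Num.min e eta by rewrite lt_min e_gt0 eta_gt0.
  by rewrite /eps => *; split; lra.
have [y [Cy py pty]] := panel_chamber_point eps_gt0 eps_e.
have [g hg] := geoX y (t y).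
have seg_off : segment y (t y) g `<=` ~` fixset r.
  move=> z /(segment_near hg py pty) pz; apply: (away r z erefl).
  exact: lt_le_trans pz eps_eta.
have seg_side : side r y = side r (t y) :=
  connected_component_eq (segment_connected hg) seg_off (segment_start hg) (segment_end hg).
rewrite (side_image_chamber Wt rW Cc Cy) -seg_side.
exact: (side_image_chamber (reflection_group_id W_refl) rW Cy Cc).
Qed.

End Panel.

Lemma chamber_adjacent_side t r c : S t -> reflections_in W r -> r <> t -> C c ->
  side r (t c) = side r c.
Proof.
move=> St rW rt Cc; have [p [e e_gt0 [tp panel]]] := panel_nbhs St.
apply: (panel_side St tp e_gt0 panel) => // rp.
by apply: rt; exact: (panel_wall_unique St tp e_gt0 panel).
Qed.

Lemma conj_adjacent_side g g' t r c : W g -> isometry_inv g g' -> S t ->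
  reflections_in W r -> r <> g \o t \o g' -> C c -> side r (g (t c)) = side r (g c).
Proof.
move=> Wg hg St rW rt Cc; have [_ gK g'K] := hg.
have Wg' := reflection_group_inv W_refl Wg gK g'K.
have r'W := reflection_group_conj W_refl Wg' (isometry_invV hg) rW.
have grg : g \o (g' \o r \o g) \o g' = r by apply/funext => x /=; rewrite !g'K.
rewrite -grg -!(isometry_inv_side _ _ hg) (chamber_adjacent_side St r'W _ Cc) //.
by move=> r't; apply: rt; rewrite -grg r't.
Qed.

Lemma walls_word_isometry_inv l : word_over S l ->
  isometry_inv (word_prod l) (word_prod (rev l)).
Proof. by apply: word_isometry_inv => t /walls_reflections []. Qed.

Lemma reflection_group_word l : word_over S l -> W (word_prod l).
Proof.
elim: l => [_|t l IH [St Sl]] /=; first exact: reflection_group_id.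
by apply: reflection_group_comp (IH Sl); have [] := walls_reflections St.
Qed.

Lemma side_along_word r c m l : reflections_in W r -> C c -> word_over S m -> word_over S l ->
  (forall k, (k < size l)%N -> r <> word_conj (m ++ take k l) (nth id l k)) ->
  side r (word_prod (m ++ l) c) = side r (word_prod m c).
Proof.
move=> rW Cc; elim: l m => [|t l IH] m Sm Sl crossed; first by rewrite cats0.
have [St Sl'] := Sl; have Smt : word_over S (rcons m t) by rewrite -cats1; apply/word_over_cat.
rewrite -cat_rcons IH // => [|k lt_k_l]; last by have := crossed k.+1 lt_k_l; rewrite /= cat_rcons.
rewrite -cats1 word_prod_cat /=.
apply: conj_adjacent_side (reflection_group_word Sm) (walls_word_isometry_inv Sm) St rW _ Cc.
by have := crossed 0%N isT; rewrite /word_conj cats0.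
Qed.

Variable T : set (X -> X).
Hypothesis TS : T `<=` S.

Lemma wall_notin_parabolic s l : S s -> ~ T s -> word_over T l -> s <> word_prod l.
Proof.
move=> Ss nTs; have [n] := ubnP (size l); elim: n l => // n IH [|t l] /ltnSE size_l Tl sE.
  have [c _] := chamber_point.
  by have [_ hs] := walls_reflections Ss; exact: reflection_neq_id c hs sE.
have [Tt Tl'] := Tl; have tW := walls_reflections (TS Tt).
have T_refl t' : T t' -> reflection t' by move=> /TS /walls_reflections [].
(* Either the wall of [t] is crossed again later and two letters cancel, or it
   separates [C] from [s C], which [chamber_adjacent_side] forbids. *)
have [[k [lt_k_l tE]]|reduced] := pselect (exists k,
    (k < size l)%N /\ t = word_conj (t :: take k l) (nth id l k)).
  apply: (IH (take k l ++ drop k.+1 l)).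
  - by rewrite size_cat size_take size_drop lt_k_l; move: size_l => /=; lia.
  - by apply/word_over_cat; split; [exact: word_over_take|exact: word_over_drop].
  - by rewrite sE (word_prod_delete T_refl lt_k_l Tl tE).
have [c Cc] := chamber_point.
have offc := off_walls_fixset tW (chamber_off_walls Cc).
have crossed : side t (word_prod (t :: l) c) = side t (t c).
  have St := TS Tt.
  apply: (side_along_word tW Cc (m := [:: t])) => //; first exact: word_over_sub TS Tl'.
  by move=> k lt_k_l tE; apply: reduced; exists k.
have ts : t <> s by move=> ts; apply: nTs; rewrite -ts.
apply: (side_reflect_neq (proj2 tW) offc); rewrite -crossed -sE.
exact: chamber_adjacent_side Ss tW ts Cc.
Qed.

Lemma parabolic_side s c l : S s -> ~ T s -> word_over T l -> C c ->
  side s (word_prod l c) = side s c.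
Proof.
move=> Ss nTs Tl Cc; have Sl := word_over_sub TS Tl.
apply: (side_along_word (m := [::]) (walls_reflections Ss) Cc) => // k lt_k_l sE.
apply: (wall_notin_parabolic Ss nTs (l := take k l ++ nth id l k :: rev (take k l))).
  apply/word_over_cat; split; first exact: word_over_take.
  by split; [exact: word_over_nth|exact/word_over_rev/word_over_take].
by rewrite word_prod_cat sE.
Qed.

End Chamber.

Theorem lemma2p3 (R : realType) (X : metricType R) (W : set (X -> X))
  (C : set X) (S T : set (X -> X)) :
  CAT0 X ->
  reflection_group W ->
  acts_properly W ->
  chamber W C ->
  cocompact_discrete W C ->
  minimal_chamber_walls W C S ->
  T `<=` S ->
  forall w w' : X -> X, gen T w -> w \o w' = id -> w' \o w = id ->
  forall s, S s -> ~ T s ->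
    w @` Xplus C s = Xplus C (w \o s \o w').
Proof.
move=> [geoX _] W_refl W_proper C_chamber C_free S_min TS w w' Tw ww' w'w s Ss nTs.
have TW : T `<=` reflections_in W := fun t Tt => walls_reflections S_min (TS t Tt).
have Ww : W w by rewrite W_refl; exact: gen_mono TW _ Tw.
have hw : isometry_inv w w' :=
  And3 (reflection_group_isometric W_refl Ww) (comp_idK w'w) (comp_idK ww').
have [l Tl w'E] := gen_word (fun t Tt => proj2 (TW t Tt)) (gen_inv Tw ww' w'w).
have [c Cc] := chamber_point C_chamber; have sW := walls_reflections S_min Ss.
rewrite (Xplus_side W_refl C_chamber sW Cc).
rewrite (Xplus_side W_refl C_chamber (reflection_group_conj W_refl Ww hw sW) Cc).
rewrite -(parabolic_side geoX W_refl W_proper C_chamber C_free S_min TS Ss nTs Tl Cc) -w'E.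
by rewrite (isometry_inv_side _ _ hw) (comp_idK ww').
Qed.
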